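(* For every $n\ge 3$, all nonnegative integers $l_1,\dots,l_n,l_\infty$, and every $i$ with $2\le i\le n-1$, the elements $s_{i,i+1}s_{i-1,i}s_{i,i+1}$ and $s_{i-1,i}s_{i,i+1}s_{i-1,i}$ of $J_n$ act identically on $X(l_1,\dots,l_n,l_\infty)$.
   Context: Cactus group: $J_n$ is the group generated by $s_{p,q}$, $1\le p<q\le n$, subject to the relations $s_{p,q}^2=e$; $s_{p,q}s_{p',q'}=s_{p',q'}s_{p,q}$ if $[p,q]$ and $[p',q']$ are disjoint; $s_{p,q}s_{p',q'}s_{p,q}=s_{p+q-q',p+q-p'}$ if $p\le p'<q'\le q$. Arc diagrams: fix nonnegative integers $l_1,\dots,l_n,l_\infty$. On the boundary circle of a closed disc place $n+1$ marked positions: position $0$ (occupied by $z_\infty$) and positions $1,\dots,n$ following it clockwise. An arc diagram is a bijective assignment of labels $z_1,\dots,z_n$ to positions $1,\dots,n$ together with a finite collection of simple arcs in the disc, pairwise disjoint except at endpoints, each joining two distinct marked points, such that $z_j$ is an endpoint of exactly $l_j$ arcs ($j\in\{1,\dots,n,\infty\}$; $l_j$ is the valence). Parallel arcs are allowed; diagrams are up to isotopy, equivalently determined by the labelling and the number of arcs between each pair of marked points. $X(l_1,\dots,l_n,l_\infty)$ is the set of such diagrams. Action: $s_{p,q}$ ($1\le p<q\le n$) acts by cutting off positions $p,\dots,q$ with a chord $\ell$ (arcs isotoped to cross $\ell$ at most once), reflecting that region by the reflection reversing $\ell$ (label at position $p+t$ goes to position $q-t$, crossing points on $\ell$ reversed),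 leaving the rest unchanged and reconnecting arcs at $\ell$. Words act right to left; this is an action of $J_n$. *)

From mathcomp Require Import all_boot all_order.
Set Implicit Arguments. Unset Strict Implicit. Unset Printing Implicit Defensive.

(* Marked positions on the circle: 'I_n.+1, position 0 is the one of z_oo,
   positions 1..n follow clockwise.  Labels are also coded by 'I_n.+1:
   label 0 stands for z_oo and label j (1 <= j <= n) for z_j. *)

(* A (raw) arc diagram: the labelling (position |-> label) and the number of
   arcs between each (ordered) pair of positions. *)
Record diagram (n : nat) := Diagram {
  dlab : {ffun 'I_n.+1 -> 'I_n.+1};
  darc : {ffun 'I_n.+1 * 'I_n.+1 -> nat}
}.

(* D is an element of X(l_1,...,l_n,l_oo), where the valences are coded by
   l : 'I_n.+1 -> nat with l 0 = l_oo and l j = l_j. *)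
Definition is_diagram n (l : 'I_n.+1 -> nat) (D : diagram n) : Prop :=
  injective (dlab D) /\ dlab D ord0 = ord0 /\
  [/\
      (forall a b, darc D (a, b) = darc D (b, a)),
      (forall a, darc D (a, a) = 0),
      (forall a b c d : 'I_n.+1,
          (a < b)%N -> (b < c)%N -> (c < d)%N ->
          darc D (a, c) = 0 \/ darc D (b, d) = 0)
    & (forall a, \sum_(b < n.+1) darc D (a, b) = l (dlab D a))].

Section Action.
Variable n : nat.
Variables p q : nat.

(* positions cut off by the chord ell *)
Definition inside (x : 'I_n.+1) : bool := (p <= x <= q)%N.

Definition refl (x : 'I_n.+1) : 'I_n.+1 :=
  if inside x then inord (p + q - x) else x.

Definition inside_asc : seq 'I_n.+1 := filter inside (enum 'I_n.+1).

(* outside positions listed counterclockwise from p-1: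
   p-1, ..., 1, 0, n, ..., q+1 *)
Definition outside_desc : seq 'I_n.+1 :=
  rev (filter (fun y : 'I_n.+1 => (q < y)%N) (enum 'I_n.+1) ++ filter (fun y : 'I_n.+1 => (y < p)%N) (enum 'I_n.+1)).

(* The arcs crossing ell, as (inside endpoint, outside endpoint), listed in the
   order of their crossing points along ell starting from the end of ell
   next to position p (for a non-crossing diagram these arcs are nested). *)
Definition cross_list (m : {ffun 'I_n.+1 * 'I_n.+1 -> nat}) :
    seq ('I_n.+1 * 'I_n.+1) :=
  flatten [seq flatten [seq nseq (m (x, y)) (x, y) | y <- outside_desc]
          | x <- inside_asc].

(* After reflecting the cut-off region, the crossing points on ell are
   reversed: at the k-th crossing point the outside half of the k-th old arc
   is reconnected with the reflected inside half of the (K+1-k)-th old arc. *)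
Definition new_cross (m : {ffun 'I_n.+1 * 'I_n.+1 -> nat}) :
    seq ('I_n.+1 * 'I_n.+1) :=
  let C := cross_list m in
  zip (map (fun c => refl c.1) (rev C)) (map snd C).

Definition act (D : diagram n) : diagram n :=
  let m := darc D in
  Diagram [ffun x => dlab D (refl x)]
    [ffun e : 'I_n.+1 * 'I_n.+1 =>
       let a := e.1 in let b := e.2 in
       if inside a && inside b then m (refl a, refl b)
       else if ~~ inside a && ~~ inside b then m (a, b)
       else if inside a then count_mem (a, b) (new_cross m)
       else count_mem (b, a) (new_cross m)].

End Action.

(* Write u, v, w for the positions i-1, i, i+1.  Both words only move arcs with an
   end in the window {u, v, w}.  Read counterclockwise, the outer ends of all arcs
   leaving the window form a sequence Q; by non-crossing the arcs of u, v and w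
   occupy three consecutive blocks of Q, of lengths a, b, c, and an arc u-w forces
   b = 0.  Each generator reflects two adjacent window positions and reverses the
   crossings on its chord, which leaves Q unchanged and only re-splits it, while the
   numbers x, y, z of arcs u-v, v-w, u-w change by explicit truncated-linear
   formulas.  A diagram is determined by Q, the split and x, y, z, and both words
   end with the same parameters.  On labels both words act as the transposition of
   u and w. *)

From mathcomp Require Import all_boot all_order zify.
Set Implicit Arguments. Unset Strict Implicit. Unset Printing Implicit Defensive.

Section SeqFacts.
Variable T : Type.
Implicit Types s : seq T.

Lemma take_cat_sub k s1 s2 : take k (s1 ++ s2) = take k s1 ++ take (k - size s1) s2.
Proof.
rewrite take_cat; case: ltnP => [lt_k | le_k]; last by rewrite (take_oversize le_k).
by rewrite (_ : k - size s1 = 0) ?take0 ?cats0 //; lia.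
Qed.

Lemma drop_cat_sub k s1 s2 : drop k (s1 ++ s2) = drop k s1 ++ drop (k - size s1) s2.
Proof.
rewrite drop_cat; case: ltnP => [lt_k | le_k]; last by rewrite (drop_oversize le_k).
by rewrite (_ : k - size s1 = 0) ?drop0 //; lia.
Qed.

Lemma take_nseq_min k e (x : T) : take k (nseq e x) = nseq (minn k e) x.
Proof.
case: (leqP k e) => [le_ke | lt_ek]; first by rewrite take_nseq // (minn_idPl le_ke).
by rewrite take_oversize ?size_nseq ?(ltnW lt_ek) // (minn_idPr (ltnW lt_ek)).
Qed.

Lemma drop_take_min k i s : drop k (take i s) = take (i - k) (drop (minn k i) s).
Proof.
case: (leqP k i) => [le_ki | lt_ik]; first by rewrite take_drop subnK.
by rewrite (_ : i - k = 0) ?take0 ?drop_oversize // ?size_take_min; lia.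
Qed.

End SeqFacts.

Lemma pairwise_rev (T : Type) (r : rel T) (s : seq T) :
  pairwise r (rev s) = pairwise (fun x y => r y x) s.
Proof. by elim: s => //= x s IH; rewrite rev_cons pairwise_rcons IH all_rev. Qed.

Section CountTakeDrop.
Variables (T : eqType) (a : pred T).
Implicit Types s : seq T.

Lemma count_take_cat k s1 s2 :
  count a (take k (s1 ++ s2)) = count a (take k s1) + count a (take (k - size s1) s2).
Proof. by rewrite take_cat_sub count_cat. Qed.

Lemma count_drop_cat k s1 s2 :
  count a (drop k (s1 ++ s2)) = count a (drop k s1) + count a (drop (k - size s1) s2).
Proof. by rewrite drop_cat_sub count_cat. Qed.

Lemma count_take_nseq k e x : count a (take k (nseq e x)) = a x * minn k e.
Proof. by rewrite take_nseq_min count_nseq. Qed.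

Lemma count_drop_nseq k e x : count a (drop k (nseq e x)) = a x * (e - k).
Proof. by rewrite drop_nseq count_nseq. Qed.

End CountTakeDrop.

Section Expansion.
Variable T : eqType.
Implicit Types (L R : seq T) (f g : T -> nat).

Definition expand L f : seq T := flatten [seq nseq (f y) y | y <- L].

Definition expansion L R := exists f, R = expand L f.

Lemma expand_cons t L f : expand (t :: L) f = nseq (f t) t ++ expand L f.
Proof. by []. Qed.

Lemma expand_rcons L t f : expand (rcons L t) f = expand L f ++ nseq (f t) t.
Proof. by rewrite /expand map_rcons -cats1 flatten_cat /= cats0. Qed.

Lemma eq_in_expand L f g : {in L, f =1 g} -> expand L f = expand L g.
Proof. by move=> efg; rewrite /expand; congr flatten; apply/eq_in_map => y /efg ->. Qed.

Lemma mem_expand L f t : t \in expand L f -> t \in L.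
Proof.
elim: L => //= y L IH; rewrite mem_cat in_cons => /orP[/nseqP[-> _]|/IH ->].
  by rewrite eqxx.
by rewrite orbT.
Qed.

Lemma count_expand L f t :
  uniq L -> count_mem t (expand L f) = if t \in L then f t else 0.
Proof.
elim: L => //= y L IH /andP[yL uL]; rewrite count_cat count_nseq IH // in_cons.
case: (eqVneq y t) => [<-|ne_yt] /=; first by rewrite (negPf yL) addn0 eqxx mul1n.
by rewrite (negPf ne_yt) mul0n.
Qed.

Lemma expand0 L f : {in L, forall y, f y = 0} -> expand L f = [::].
Proof. by move=> f0; rewrite (@eq_in_expand _ _ (fun=> 0)) //; elim: L {f0}. Qed.

Lemma cat_expand L f g : pairwise (fun t t' => (g t == 0) || (f t' == 0)) L ->
  expand L f ++ expand L g = expand L (fun y => f y + g y).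
Proof.
elim: L => //= t L IH /andP[/allP gt0 pwL]; rewrite !expand_cons.
have [-> | gt_ne0] := eqVneq (g t) 0; first by rewrite addn0 -catA IH.
have fL0 : {in L, forall y, f y = 0}.
  by move=> y /gt0 /=; rewrite (negPf gt_ne0) => /eqP.
rewrite (expand0 fL0) cats0 nseqD -catA; congr (_ ++ (_ ++ _)).
by apply: eq_in_expand => y /fL0 ->.
Qed.

Lemma expansion_mem L R t : expansion L R -> t \in R -> t \in L.
Proof. by case=> f -> /mem_expand. Qed.

Lemma expand_count L R f : uniq L -> expansion L R ->
  {in L, forall t, f t = count_mem t R} -> expand L f = R.
Proof.
move=> uL [g ->] fR; apply: eq_in_expand => t tL.
by rewrite fR // count_expand // tL.
Qed.

Lemma expansion_take L R k : uniq L -> expansion L R -> expansion L (take k R).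
Proof.
move=> uL [f ->]; elim: L uL k f => [|t L IH] /= uL k f; first by exists f.
case/andP: uL => tL uL; rewrite expand_cons take_cat_sub take_nseq_min size_nseq.
have [g ->] := IH uL (k - f t) f.
exists (fun y => if y == t then minn k (f t) else g y).
rewrite expand_cons eqxx; congr (_ ++ _); apply: eq_in_expand => y yL.
by case: eqP yL tL => // -> ->.
Qed.

Lemma expansion_drop L R k : uniq L -> expansion L R -> expansion L (drop k R).
Proof.
move=> uL [f ->]; elim: L uL k f => [|t L IH] /= uL k f; first by exists f.
case/andP: uL => tL uL; rewrite expand_cons drop_cat_sub drop_nseq size_nseq.
have [g ->] := IH uL (k - f t) f.
exists (fun y => if y == t then f t - k else g y).
rewrite expand_cons eqxx; congr (_ ++ _); apply: eq_in_expand => y yL.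
by case: eqP yL tL => // -> ->.
Qed.

End Expansion.

Lemma zip_nseq_size (T1 T2 : Type) (x : T1) (s : seq T2) :
  zip (nseq (size s) x) s = map (pair x) s.
Proof. by elim: s => //= y s ->. Qed.

Lemma zip_nseq_cat (T1 T2 : Type) (x y : T1) (s : seq T2) k l : k + l = size s ->
  zip (nseq k x ++ nseq l y) s = map (pair x) (take k s) ++ map (pair y) (drop k s).
Proof.
move=> kl_s; have size_take_k : size (take k s) = k by rewrite size_takel // -kl_s leq_addr.
have size_drop_k : size (drop k s) = l by rewrite size_drop -kl_s addKn.
rewrite -{1}(cat_take_drop k s) zip_cat ?size_nseq //.
by rewrite -{1}size_take_k -{1}size_drop_k !zip_nseq_size.
Qed.

Lemma count_map_pair (T1 T2 : eqType) (x a : T1) (b : T2) s :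
  count_mem (a, b) (map (pair x) s) = (x == a) * count_mem b s.
Proof.
elim: s => [|y s IH] /=; first by rewrite muln0.
by rewrite IH xpair_eqE; case: (x == a); rewrite ?mul1n ?mul0n.
Qed.

Lemma filter_iota_between m k N : m <= k <= N ->
  [seq x <- iota 0 N | m <= x < k] = iota m (k - m).
Proof.
move=> le_mkN; have -> : N = m + ((k - m) + (N - k)) by lia.
rewrite !iotaD !filter_cat add0n (_ : m + (k - m) = k); last by lia.
rewrite [X in X ++ _](eq_in_filter (a2 := pred0)) ?filter_pred0; last first.
  by move=> x; rewrite mem_iota /=; lia.
rewrite [X in _ ++ (_ ++ X)](eq_in_filter (a2 := pred0)) ?filter_pred0; last first.
  by move=> x; rewrite mem_iota /=; lia.
by rewrite cats0 (eq_in_filter (a2 := predT)) ?filter_predT // => x; rewrite mem_iota /=; lia.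
Qed.

Lemma val_filter_enum n (P : pred nat) :
  map val [seq x <- enum 'I_n.+1 | P (val x)] = [seq x <- iota 0 n.+1 | P x].
Proof. by rewrite -val_enum_ord filter_map. Qed.

Lemma val_outside_desc n p q : p <= q <= n ->
  map val (outside_desc n p q) = rev (iota q.+1 (n - q) ++ iota 0 p).
Proof.
move=> le_pqn; rewrite /outside_desc map_rev map_cat (val_filter_enum n (fun y => q < y)).
rewrite (val_filter_enum n (fun y => y < p)).
rewrite (@eq_in_filter _ (fun y => q < y) (fun k => q.+1 <= k < n.+1)); last first.
  by move=> k; rewrite mem_iota; lia.
rewrite (@eq_filter _ (fun y => y < p) (fun k => 0 <= k < p)); last by move=> k; lia.
by rewrite !filter_iota_between ?subn0 ?subSS //; lia.
Qed.

Section Action.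
Variables n p q : nat.
Implicit Types (D : diagram n) (r s x : 'I_n.+1).

Lemma act_lab D x : dlab (act p q D) x = dlab D (refl p q x).
Proof. by rewrite ffunE. Qed.

Lemma act_out D r s : ~~ inside p q r -> ~~ inside p q s ->
  darc (act p q D) (r, s) = darc D (r, s).
Proof. by move=> /negPf r_out /negPf s_out; rewrite ffunE /= r_out s_out. Qed.

Lemma act_in D r s : inside p q r -> inside p q s ->
  darc (act p q D) (r, s) = darc D (refl p q r, refl p q s).
Proof. by move=> r_in s_in; rewrite ffunE /= r_in s_in. Qed.

Lemma refl_out r : ~~ inside p q r -> refl p q r = r.
Proof. by rewrite /refl => /negPf ->. Qed.

Lemma act_sym D : (forall r s, darc D (r, s) = darc D (s, r)) ->
  forall r s, darc (act p q D) (r, s) = darc (act p q D) (s, r).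
Proof.
by move=> Dsym r s; rewrite !ffunE /=; case: (inside p q r); case: (inside p q s).
Qed.

Lemma act_diag D : (forall r, darc D (r, r) = 0) -> forall r, darc (act p q D) (r, r) = 0.
Proof. by move=> Ddiag r; rewrite ffunE /=; case: (inside p q r); apply: Ddiag. Qed.

End Action.

Section AdjacentPair.
Variables n p : nat.
Hypothesis lt_pn : p < n.
Implicit Types (D : diagram n) (m : {ffun 'I_n.+1 * 'I_n.+1 -> nat}) (s : 'I_n.+1).

Lemma inside_adj s : inside p p.+1 s = (s == inord p) || (s == inord p.+1).
Proof. by rewrite /inside -!(inj_eq val_inj) /= !inordK; lia. Qed.

Lemma inord_adj_neq : (inord p : 'I_n.+1) != inord p.+1.
Proof. by rewrite -(inj_eq val_inj) /= !inordK //; lia. Qed.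

Lemma refl_adj_lo : refl p p.+1 (inord p : 'I_n.+1) = inord p.+1.
Proof. by rewrite /refl inside_adj eqxx /=; congr inord; rewrite inordK; lia. Qed.

Lemma refl_adj_hi : refl p p.+1 (inord p.+1 : 'I_n.+1) = inord p.
Proof. by rewrite /refl inside_adj eqxx orbT; congr inord; rewrite inordK; lia. Qed.

Lemma inside_asc_adj : inside_asc n p p.+1 = [:: inord p; inord p.+1].
Proof.
apply: (inj_map val_inj); rewrite /inside_asc (val_filter_enum n (fun k => p <= k <= p.+1)).
rewrite (@eq_filter _ _ (fun k => p <= k < p.+2)); last by move=> k; lia.
by rewrite filter_iota_between /= ?inordK //; try lia; rewrite (_ : p.+2 - p = 2) //; lia.
Qed.

Definition out_arcs m s := expand (outside_desc n p p.+1) (fun y => m (s, y)).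

(* The outer ends of the arcs crossing the chord, in the order of [cross_list]. *)
Definition chord_seq D := out_arcs (darc D) (inord p) ++ out_arcs (darc D) (inord p.+1).

Lemma new_cross_adj D : new_cross p p.+1 (darc D) =
  map (pair (inord p)) (take (size (out_arcs (darc D) (inord p.+1))) (chord_seq D)) ++
  map (pair (inord p.+1)) (drop (size (out_arcs (darc D) (inord p.+1))) (chord_seq D)).
Proof.
have flatten_pair s' : flatten [seq nseq (darc D (s', y)) (s', y) | y <- outside_desc n p p.+1]
    = map (pair s') (out_arcs (darc D) s').
  by rewrite /out_arcs /expand; elim: (outside_desc n p p.+1) => //= y l ->; rewrite map_cat map_nseq.
have map_refl_rev s' l : [seq refl p p.+1 c.1 | c <- rev (map (pair s') l)] =
    nseq (size l) (refl p p.+1 s').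
  by rewrite map_rev -rev_nseq; congr rev; elim: l => //= y l ->.
have map_snd_pair s' l : map snd (map (pair s') l) = l by elim: l => //= y l ->.
rewrite /new_cross /cross_list inside_asc_adj /= cats0 !flatten_pair rev_cat map_cat.
rewrite !map_refl_rev refl_adj_lo refl_adj_hi map_cat !map_snd_pair.
by rewrite zip_nseq_cat // !size_cat addnC.
Qed.

Lemma inside_adj_lo : inside p p.+1 (inord p : 'I_n.+1).
Proof. by rewrite inside_adj eqxx. Qed.

Lemma inside_adj_hi : inside p p.+1 (inord p.+1 : 'I_n.+1).
Proof. by rewrite inside_adj eqxx orbT. Qed.

(* The reflection reverses the crossing points on the chord, so after the move
   position [p] receives the first [size (out_arcs _ (inord p.+1))] of them. *)
Lemma act_adj_lo D s : ~~ inside p p.+1 s -> darc (act p p.+1 D) (inord p, s) =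
  count_mem s (take (size (out_arcs (darc D) (inord p.+1))) (chord_seq D)).
Proof.
move=> /negPf s_out; rewrite ffunE /= inside_adj_lo s_out new_cross_adj count_cat.
by rewrite !count_map_pair eqxx eq_sym (negPf inord_adj_neq) mul1n mul0n addn0.
Qed.

Lemma act_adj_hi D s : ~~ inside p p.+1 s -> darc (act p p.+1 D) (inord p.+1, s) =
  count_mem s (drop (size (out_arcs (darc D) (inord p.+1))) (chord_seq D)).
Proof.
move=> /negPf s_out; rewrite ffunE /= inside_adj_hi s_out new_cross_adj count_cat.
by rewrite !count_map_pair eqxx (negPf inord_adj_neq) mul1n mul0n.
Qed.

End AdjacentPair.

Section Window.
Variables n j : nat.
Hypothesis lt_jn : j.+1 < n.
Implicit Types (D : diagram n) (m : {ffun 'I_n.+1 * 'I_n.+1 -> nat}) (r s t : 'I_n.+1).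

Let lt_j0n : j < n := ltnW lt_jn.

(* The window of positions i-1, i, i+1, where i = j+1. *)
Definition pu : 'I_n.+1 := inord j.
Definition pv : 'I_n.+1 := inord j.+1.
Definition pw : 'I_n.+1 := inord j.+2.
Definition outer : seq 'I_n.+1 := outside_desc n j j.+2.

Lemma val_pu : pu = j :> nat. Proof. by apply: inordK; lia. Qed.
Lemma val_pv : pv = j.+1 :> nat. Proof. by apply: inordK; lia. Qed.
Lemma val_pw : pw = j.+2 :> nat. Proof. by apply: inordK; lia. Qed.

Lemma mem_outer t : (t \in outer) = (t < j) || (j.+2 < t).
Proof.
rewrite -(mem_map val_inj) val_outside_desc; last by lia.
by rewrite mem_rev mem_cat !mem_iota /=; have := ltn_ord t; lia.
Qed.

Lemma uniq_outer : uniq outer.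
Proof.
rewrite -(map_inj_uniq val_inj) val_outside_desc; last by lia.
rewrite rev_uniq cat_uniq !iota_uniq /= andbT.
by apply/hasPn => k; rewrite !mem_iota; lia.
Qed.

Lemma outside_desc_hi : outside_desc n j.+1 j.+2 = pu :: outer.
Proof.
apply: (inj_map val_inj); rewrite /= !val_outside_desc ?val_pu; try lia.
by rewrite (_ : iota 0 j.+1 = rcons (iota 0 j) j) -?rcons_cat ?rev_rcons // -cats1 -addn1 iotaD.
Qed.

Lemma outside_desc_lo : outside_desc n j j.+1 = rcons outer pw.
Proof.
apply: (inj_map val_inj); rewrite map_rcons /= !val_outside_desc ?val_pw; try lia.
by rewrite (_ : n - j.+1 = (n - j.+2).+1) /= ?rev_cons //; lia.
Qed.

Lemma window_cases r : [\/ r = pu, r = pv, r = pw | r \in outer].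
Proof.
rewrite mem_outer.
have /or4P[/eqP r_j|/eqP r_j1|/eqP r_j2|r_out] :
    [|| nat_of_ord r == j, nat_of_ord r == j.+1, nat_of_ord r == j.+2 | (r < j) || (j.+2 < r)].
  by lia.
- by apply: Or41; apply: val_inj; rewrite /= val_pu.
- by apply: Or42; apply: val_inj; rewrite /= val_pv.
- by apply: Or43; apply: val_inj; rewrite /= val_pw.
- exact: Or44.
Qed.

Lemma mem_outer_window t : (t \in outer) = (t \notin [:: pu; pv; pw]).
Proof. by rewrite mem_outer !inE -!(inj_eq val_inj) /= val_pu val_pv val_pw; lia. Qed.

Lemma outer_not_inside_hi t : t \in outer -> ~~ inside j.+1 j.+2 t.
Proof. by rewrite mem_outer /inside; lia. Qed.

Lemma outer_not_inside_lo t : t \in outer -> ~~ inside j j.+1 t.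
Proof. by rewrite mem_outer /inside; lia. Qed.

Lemma pu_notin_outer : pu \notin outer.
Proof. by rewrite mem_outer val_pu; lia. Qed.

Lemma pw_notin_outer : pw \notin outer.
Proof. by rewrite mem_outer val_pw; lia. Qed.

Lemma pu_not_inside_hi : ~~ inside j.+1 j.+2 pu.
Proof. by rewrite /inside val_pu; lia. Qed.

Lemma pw_not_inside_lo : ~~ inside j j.+1 pw.
Proof. by rewrite /inside val_pw; lia. Qed.

Lemma refl_braid r : refl j.+1 j.+2 (refl j j.+1 (refl j.+1 j.+2 r)) =
                     refl j j.+1 (refl j.+1 j.+2 (refl j j.+1 r)).
Proof.
have reflU_u : refl j j.+1 pu = pv := refl_adj_lo lt_j0n.
have reflU_v : refl j j.+1 pv = pu := refl_adj_hi lt_j0n.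
have reflU_w : refl j j.+1 pw = pw := refl_out pw_not_inside_lo.
have reflT_u : refl j.+1 j.+2 pu = pu := refl_out pu_not_inside_hi.
have reflT_v : refl j.+1 j.+2 pv = pw := refl_adj_lo lt_jn.
have reflT_w : refl j.+1 j.+2 pw = pv := refl_adj_hi lt_jn.
case: (window_cases r) => [->|->|->|r_out];
  try by rewrite !(reflT_u, reflT_v, reflT_w, reflU_u, reflU_v, reflU_w).
by rewrite !refl_out ?outer_not_inside_hi ?outer_not_inside_lo.
Qed.

(* [Q] lists, counterclockwise from position j-1, the outer ends of the arcs
   leaving the window: the first [a] start at [pu], the next [b] at [pv], the last
   [c] at [pw]; [x], [y], [z] count the arcs pu-pv, pv-pw, pu-pw.  An arc pu-pw
   encloses [pv], whence [lf_nested]. *)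
Record local_form m (Q : seq 'I_n.+1) (a b c x y z : nat) : Prop := LocalForm {
  lf_sym : forall r s, m (r, s) = m (s, r);
  lf_diag : forall r, m (r, r) = 0;
  lf_u : {in outer, forall t, m (pu, t) = count_mem t (take a Q)};
  lf_v : {in outer, forall t, m (pv, t) = count_mem t (take b (drop a Q))};
  lf_w : {in outer, forall t, m (pw, t) = count_mem t (drop (a + b) Q)};
  lf_uv : m (pu, pv) = x;
  lf_vw : m (pv, pw) = y;
  lf_uw : m (pu, pw) = z;
  lf_size : a + b + c = size Q;
  lf_nested : 0 < z -> b = 0 }.

Lemma local_form_unique m1 m2 Q a b c x y z a' b' c' x' y' z' :
  local_form m1 Q a b c x y z -> local_form m2 Q a' b' c' x' y' z' ->
  (a, b, x, y, z) = (a', b', x', y', z') ->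
  {in outer &, forall r s, m1 (r, s) = m2 (r, s)} -> m1 = m2.
Proof.
move=> L1 L2 [? ? ? ? ?] eq_outer; subst.
have [sym1 sym2] := (lf_sym L1, lf_sym L2).
have eq_window r s : r \in [:: pu; pv; pw] -> m1 (r, s) = m2 (r, s).
  rewrite !inE => /or3P[]/eqP->; case: (window_cases s) => [->|->|->|s_out];
  rewrite ?(sym1 pv pu, sym2 pv pu, sym1 pw pu, sym2 pw pu, sym1 pw pv, sym2 pw pv);
  by rewrite ?(lf_diag L1, lf_diag L2, lf_uv L1, lf_uv L2, lf_vw L1, lf_vw L2, lf_uw L1, lf_uw L2)
             ?(lf_u L1, lf_u L2, lf_v L1, lf_v L2, lf_w L1, lf_w L2).
apply/ffunP => -[r s].
have [r_win|r_out] := boolP (r \in [:: pu; pv; pw]); first exact: eq_window.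
have [s_win|s_out] := boolP (s \in [:: pu; pv; pw]); first by rewrite sym1 sym2 eq_window.
by apply: eq_outer; rewrite mem_outer_window.
Qed.

Definition outer_arcs m s := expand outer (fun t => m (s, t)).

Lemma out_arcs_hi m s : out_arcs j.+1 m s = nseq (m (s, pu)) pu ++ outer_arcs m s.
Proof. by rewrite /out_arcs outside_desc_hi expand_cons. Qed.

Lemma out_arcs_lo m s : out_arcs j m s = outer_arcs m s ++ nseq (m (s, pw)) pw.
Proof. by rewrite /out_arcs outside_desc_lo expand_rcons. Qed.

Section Moves.
Variables (D : diagram n) (Q : seq 'I_n.+1) (a b c x y z : nat).
Hypotheses (expQ : expansion outer Q) (L : local_form (darc D) Q a b c x y z).

Lemma outer_arcs_u : outer_arcs (darc D) pu = take a Q.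
Proof. exact: expand_count uniq_outer (expansion_take _ uniq_outer expQ) (lf_u L). Qed.

Lemma outer_arcs_v : outer_arcs (darc D) pv = take b (drop a Q).
Proof.
have expQ' := expansion_take b uniq_outer (expansion_drop a uniq_outer expQ).
exact: expand_count uniq_outer expQ' (lf_v L).
Qed.

Lemma outer_arcs_w : outer_arcs (darc D) pw = drop (a + b) Q.
Proof. exact: expand_count uniq_outer (expansion_drop _ uniq_outer expQ) (lf_w L). Qed.

Lemma chord_seq_hi : chord_seq j.+1 D = nseq (x + z) pu ++ drop a Q.
Proof.
rewrite /chord_seq !out_arcs_hi outer_arcs_v outer_arcs_w.
rewrite (lf_sym L pv) (lf_sym L pw) (lf_uv L) (lf_uw L) nseqD -!catA.
have [-> | /(lf_nested L) ->] := posnP z; last by rewrite take0 addn0.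
by rewrite addnC -drop_drop cat_take_drop.
Qed.

Lemma size_out_arcs_hi : size (out_arcs j.+1 (darc D) pw) = z + c.
Proof.
rewrite out_arcs_hi outer_arcs_w size_cat size_nseq size_drop (lf_sym L pw) (lf_uw L).
by rewrite -(lf_size L); lia.
Qed.

Lemma chord_seq_lo : chord_seq j D = take (a + b) Q ++ nseq (z + y) pw.
Proof.
rewrite /chord_seq !out_arcs_lo outer_arcs_u outer_arcs_v (lf_uw L) (lf_vw L).
rewrite nseqD takeD !catA; congr (_ ++ _); rewrite -!catA; congr (_ ++ _).
by have [-> | /(lf_nested L) ->] := posnP z; rewrite ?take0 ?cats0.
Qed.

Lemma size_out_arcs_lo : size (out_arcs j (darc D) pv) = b + y.
Proof.
rewrite out_arcs_lo outer_arcs_v size_cat size_nseq size_take_min size_drop (lf_vw L).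
by rewrite -(lf_size L); lia.
Qed.

Lemma count_notin_outer r R : r \notin outer -> {subset R <= Q} -> count_mem r R = 0.
Proof. by move=> r_out RQ; apply/count_memPn; apply: contra r_out => /RQ /(expansion_mem expQ). Qed.

Lemma local_form_act_hi : local_form (darc (act j.+1 j.+2 D)) Q
  a (c - x) (b + c - (c - x)) (minn (z + c) (x + z)) y (x - c).
Proof.
have pu_out := pu_notin_outer; have t_not_inside := outer_not_inside_hi.
have pu_neq t : t \in outer -> (pu == t) = false.
  by move=> t_out; apply: contraNF pu_out => /eqP ->.
have sub_take k : {subset take k (drop a Q) <= Q} by move=> t /mem_take /mem_drop.
have sub_drop k : {subset drop k (drop a Q) <= Q} by move=> t /mem_drop /mem_drop.
have L' := act_sym j.+1 j.+2 (lf_sym L).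
apply: LocalForm => [||t t_out|t t_out|t t_out|||||].
- exact: L'.
- exact: act_diag (lf_diag L).
- by rewrite act_out ?pu_not_inside_hi ?t_not_inside ?(lf_u L).
- rewrite act_adj_lo ?t_not_inside // chord_seq_hi size_out_arcs_hi count_take_cat.
  by rewrite count_take_nseq /= pu_neq // size_nseq; congr (count_mem t (take _ _)); lia.
- rewrite act_adj_hi ?t_not_inside // chord_seq_hi size_out_arcs_hi count_drop_cat.
  by rewrite count_drop_nseq /= pu_neq // size_nseq drop_drop; congr (count_mem t (drop _ _)); lia.
- rewrite L' act_adj_lo ?pu_not_inside_hi // chord_seq_hi size_out_arcs_hi count_take_cat.
  by rewrite count_take_nseq /= eqxx mul1n (count_notin_outer pu_out (sub_take _)) addn0.
- by rewrite act_in ?inside_adj_lo ?inside_adj_hi // refl_adj_lo // refl_adj_hi // (lf_sym L) (lf_vw L).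
- rewrite L' act_adj_hi ?pu_not_inside_hi // chord_seq_hi size_out_arcs_hi count_drop_cat.
  by rewrite count_drop_nseq /= eqxx mul1n (count_notin_outer pu_out (sub_drop _)) addn0; lia.
- by rewrite -(lf_size L); lia.
- by lia.
Qed.

Lemma local_form_act_lo : local_form (darc (act j j.+1 D)) Q
  (minn (b + y) (a + b)) ((a + b) - (b + y)) c
  x ((z + y) - ((b + y) - (a + b))) ((b + y) - (a + b)).
Proof.
have pw_out := pw_notin_outer; have t_not_inside := outer_not_inside_lo.
have pw_neq t : t \in outer -> (pw == t) = false.
  by move=> t_out; apply: contraNF pw_out => /eqP ->.
have sub_drop k l : {subset drop k (take l Q) <= Q} by move=> t /mem_drop /mem_take.
have sub_take k l : {subset take k (take l Q) <= Q} by move=> t /mem_take /mem_take.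
have size_take_ab : size (take (a + b) Q) = a + b by rewrite size_take_min -(lf_size L); lia.
have L' := act_sym j j.+1 (lf_sym L).
apply: LocalForm => [||t t_out|t t_out|t t_out|||||].
- exact: L'.
- exact: act_diag (lf_diag L).
- rewrite act_adj_lo ?t_not_inside // chord_seq_lo size_out_arcs_lo count_take_cat.
  by rewrite count_take_nseq /= pw_neq // addn0 -take_min.
- rewrite act_adj_hi ?t_not_inside // chord_seq_lo size_out_arcs_lo count_drop_cat.
  by rewrite count_drop_nseq /= pw_neq // addn0 drop_take_min.
- rewrite act_out ?pw_not_inside_lo ?t_not_inside ?(lf_w L) //.
  by congr (count_mem t (drop _ _)); lia.
- by rewrite act_in ?inside_adj_lo ?inside_adj_hi // refl_adj_lo // refl_adj_hi // (lf_sym L) (lf_uv L).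
- rewrite act_adj_hi ?pw_not_inside_lo // chord_seq_lo size_out_arcs_lo count_drop_cat.
  by rewrite count_drop_nseq /= eqxx mul1n size_take_ab (count_notin_outer pw_out (sub_drop _ _)).
- rewrite act_adj_lo ?pw_not_inside_lo // chord_seq_lo size_out_arcs_lo count_take_cat.
  rewrite count_take_nseq /= eqxx mul1n size_take_ab.
  by rewrite (count_notin_outer pw_out (sub_take _ _)); lia.
- by rewrite -(lf_size L); lia.
- by lia.
Qed.

End Moves.

(* [t] comes strictly before [t'] in [outer]. *)
Definition ccw_before (t t' : 'I_n.+1) : bool :=
  [|| t' < t < j, (t < j) && (j.+2 < t') | j.+2 < t' < t].

Lemma pairwise_ccw_outer : pairwise ccw_before outer.
Proof.
have ltn_filter_enum (P : pred 'I_n.+1) : pairwise (fun r s : 'I_n.+1 => r < s) (filter P (enum 'I_n.+1)).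
  rewrite -sorted_pairwise; last exact: ltn_trans.
  apply: sorted_filter; first exact: ltn_trans.
  by have := iota_ltn_sorted 0 n.+1; rewrite -val_enum_ord sorted_map.
rewrite /outer /outside_desc pairwise_rev pairwise_cat; apply/and3P; split.
  apply/allrelP => t t'; rewrite !mem_filter => /andP[t_gt _] /andP[t'_lt _].
  by rewrite /ccw_before t'_lt t_gt orbT.
all: apply: (sub_in_pairwise _ (allss _) (ltn_filter_enum _)) => t t'.
all: by rewrite !mem_filter => /andP[? _] /andP[? _] ?; rewrite /ccw_before; lia.
Qed.

Section Initial.
Variable D : diagram n.
Hypotheses (Dsym : forall r s, darc D (r, s) = darc D (s, r))
           (Ddiag : forall r, darc D (r, r) = 0)
           (Dnc : forall r s t u : 'I_n.+1, r < s -> s < t -> t < u ->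
                  darc D (r, t) = 0 \/ darc D (s, u) = 0).

Lemma noncrossing_ccw (P R t t' : 'I_n.+1) : j <= P -> P < R -> R <= j.+2 ->
  ccw_before t t' -> darc D (R, t) = 0 \/ darc D (P, t') = 0.
Proof.
move=> le_jP lt_PR le_Rj /or3P[/andP[lt_t't lt_tj] | /andP[lt_tj lt_jt'] | /andP[lt_jt' lt_t't]].
- have [E|E] := Dnc lt_t't (leq_trans lt_tj le_jP) lt_PR; [right|left]; by rewrite Dsym.
- have [E|E] := Dnc (leq_trans lt_tj le_jP) lt_PR (leq_ltn_trans le_Rj lt_jt').
    by left; rewrite Dsym.
  by right.
- by have [E|E] := Dnc lt_PR (leq_ltn_trans le_Rj lt_jt') lt_t't; [right|left].
Qed.

Definition window_seq := outer_arcs (darc D) pu ++ outer_arcs (darc D) pv ++ outer_arcs (darc D) pw.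

Lemma expansion_window_seq : expansion outer window_seq.
Proof.
have nc (P R : 'I_n.+1) : j <= P -> P < R -> R <= j.+2 -> forall t t', ccw_before t t' ->
    (darc D (R, t) == 0) || (darc D (P, t') == 0).
  by move=> le_jP lt_PR le_Rj t t' /(noncrossing_ccw le_jP lt_PR le_Rj) [] ->; rewrite eqxx ?orbT.
have u_j := val_pu; have v_j := val_pv; have w_j := val_pw.
rewrite /window_seq /outer_arcs catA cat_expand; last first.
  by apply: sub_pairwise pairwise_ccw_outer; apply: nc; lia.
rewrite cat_expand; first by eexists.
apply: sub_pairwise pairwise_ccw_outer => t t' before.
have /orP[-> // | /eqP u_t'] : _ := nc pu pw ltac:(lia) ltac:(lia) ltac:(lia) t t' before.
have /orP[-> // | /eqP v_t'] : _ := nc pv pw ltac:(lia) ltac:(lia) ltac:(lia) t t' before.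
by rewrite u_t' v_t' orbT.
Qed.

Lemma local_form_window_seq : local_form (darc D) window_seq
  (size (outer_arcs (darc D) pu)) (size (outer_arcs (darc D) pv)) (size (outer_arcs (darc D) pw))
  (darc D (pu, pv)) (darc D (pv, pw)) (darc D (pu, pw)).
Proof.
have count_outer s t : t \in outer -> darc D (s, t) = count_mem t (outer_arcs (darc D) s).
  by move=> t_out; rewrite count_expand ?uniq_outer // t_out.
have u_j := val_pu; have v_j := val_pv; have w_j := val_pw.
apply: LocalForm => [//|//|t t_out|t t_out|t t_out|//|//|//||].
- by rewrite take_size_cat // count_outer.
- by rewrite drop_size_cat // take_size_cat // count_outer.
- by rewrite /window_seq catA drop_size_cat ?size_cat // count_outer.
- by rewrite !size_cat addnA.
move=> /lt0n_neq0/negPf uw_ne0; apply/eqP; rewrite size_eq0; apply/eqP/expand0 => t.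
have lt_uv : pu < pv by lia.
have lt_vw : pv < pw by lia.
rewrite mem_outer => /orP[lt_tj | lt_jt].
- have lt_tu : t < pu by lia.
  have [tv0 | uw0] := Dnc lt_tu lt_uv lt_vw; first by rewrite Dsym.
  by rewrite uw0 in uw_ne0.
- have lt_wt : pw < t by lia.
  have [uw0 | //] := Dnc lt_uv lt_vw lt_wt.
  by rewrite uw0 in uw_ne0.
Qed.

End Initial.

Lemma darc_braid D Q a b c x y z : expansion outer Q -> local_form (darc D) Q a b c x y z ->
  darc (act j.+1 j.+2 (act j j.+1 (act j.+1 j.+2 D))) =
  darc (act j j.+1 (act j.+1 j.+2 (act j j.+1 D))).
Proof.
move=> expQ L; have nested := lf_nested L.
have L_hlh := local_form_act_hi expQ (local_form_act_lo expQ (local_form_act_hi expQ L)).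
have L_lhl := local_form_act_lo expQ (local_form_act_hi expQ (local_form_act_lo expQ L)).
apply: (local_form_unique L_hlh L_lhl); first by congr (_, _, _, _, _); lia.
move=> r s r_out s_out.
have [r_hi s_hi] := (outer_not_inside_hi r_out, outer_not_inside_hi s_out).
have [r_lo s_lo] := (outer_not_inside_lo r_out, outer_not_inside_lo s_out).
rewrite [LHS](act_out _ r_hi s_hi) [LHS](act_out _ r_lo s_lo) [LHS](act_out _ r_hi s_hi).
by rewrite [RHS](act_out _ r_lo s_lo) [RHS](act_out _ r_hi s_hi) [RHS](act_out _ r_lo s_lo).
Qed.

Lemma dlab_braid D : dlab (act j.+1 j.+2 (act j j.+1 (act j.+1 j.+2 D))) =
                     dlab (act j j.+1 (act j.+1 j.+2 (act j j.+1 D))).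
Proof.
apply/ffunP => r; do 3 rewrite [LHS]act_lab; do 3 rewrite [RHS]act_lab.
by rewrite refl_braid.
Qed.

End Window.

Lemma diagram_ext n (D1 D2 : diagram n) : dlab D1 = dlab D2 -> darc D1 = darc D2 -> D1 = D2.
Proof. by case: D1 D2 => [? ?] [? ?] /= -> ->. Qed.

Theorem mainTheorem15 (n : nat) (l : 'I_n.+1 -> nat) (i : nat) (D : diagram n) :
  (3 <= n)%N -> (2 <= i <= n.-1)%N -> is_diagram l D ->
  act i i.+1 (act i.-1 i (act i i.+1 D)) = act i.-1 i (act i i.+1 (act i.-1 i D)).
Proof.
move=> _ /andP[i2 le_in] [_ [_ [Dsym Ddiag Dnc _]]].
have [j -> lt_jn] : exists2 j, i = j.+1 & j.+1 < n by exists i.-1; lia.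
rewrite succnK; apply: diagram_ext; first exact: dlab_braid.
exact: darc_braid (expansion_window_seq lt_jn Dsym Dnc) (local_form_window_seq lt_jn Dsym Ddiag Dnc).
Qed.
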